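(* Each of the following systems has an isochronous center at the origin $O$ with zero Urabe function: (i) for every $a\in\mathbb R$: $\dot x=-y+axy+x^2-ax^3$, $\dot y=x+4ay^2-2xy-\frac32ax^2-6ax^2y+(2+a^2)x^3+\left(2a-\frac14a^3\right)x^4$; (ii) for every $a\in\mathbb R$: $\dot x=-y+axy+x^2-ax^3$, $\dot y=x+3ay^2-2xy-ax^2-4ax^2y+\left(\frac13a^2+2\right)x^3+ax^4$; (iii) for $\beta=\pm\sqrt3$: $\dot x=-y+2\beta xy+x^2-2\beta x^3$, $\dot y=x+8\beta y^2-2xy-3\beta x^2-12\beta x^2y+14x^3-2\beta x^4$; (iv) for $\alpha=\pm\sqrt2$: $\dot x=-y+\alpha xy+x^2-\frac43\alpha x^3+\frac23x^4$, $\dot y=x+6\alpha y^2-2xy-\frac52\alpha x^2-9\alpha x^2y+\frac{26}{3}x^3+6x^3y-\frac83\alpha x^4$; (v) for $\alpha=\pm\sqrt2$: $\dot x=-y+\alpha xy+x^2-\frac43\alpha x^3+\frac23x^4$, $\dot y=x+3\alpha y^2-2xy-\alpha x^2-3\alpha x^2y+\frac83x^3+2x^3y-\frac23\alpha x^4$.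
   Context: For a real planar polynomial system $\dot x=-y+A(x,y)$, $\dot y=x+B(x,y)$, with $A,B$ polynomials having no terms of degree $<2$, the origin $O$ is an isochronous center if there is a punctured neighborhood of $O$ in which every orbit is a closed orbit surrounding $O$ and all these orbits have the same period. Zero Urabe function: write the system as $\dot x=p_0(x)+p_1(x)y$, $\dot y=q_0(x)+q_1(x)y+q_2(x)y^2$ ($p_0(0)=q_0(0)=0$, $p_1(0)\ne0$), where it holds that $-\frac{p_1'p_0}{p_1}+q_1+p_0'-\frac{2q_2p_0}{p_1}\equiv0$. Put $f=-\frac{q_2+p_1'}{p_1}$, $g=-\frac{q_2p_0^2}{p_1}+q_1p_0-p_1q_0$ (the change $z=p_0+p_1y$ gives $\dot x=z$, $\dot z=-g(x)-f(x)z^2$), $F(x)=\int_0^xf$, and $\xi$ near $0$ by $\frac12\xi(x)^2=\int_0^xg(s)e^{2F(s)}ds$, $x\xi(x)>0$ for $x\ne0$. The Urabe function of an isochronous center is the odd analytic $h$ with $\frac{\xi(x)}{1+h(\xi(x))}=g(x)e^{F(x)}$; ''zero Urabe function'' means $h\equiv0$, i.e. $\xi(x)=g(x)e^{F(x)}$ near $0$. *)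

From Stdlib Require Import Reals Lra.
Open Scope R_scope.

Definition is_solution (P Q : R -> R -> R) (x y : R -> R) : Prop :=
  forall t, derivable_pt_lim x t (P (x t) (y t)) /\
            derivable_pt_lim y t (Q (x t) (y t)).

(* The closed curve t |-> (x t, y t), t in [0,T], surrounds the origin:
   it avoids O and has nonzero winding number about O (measured by a
   continuous polar angle). *)
Definition surrounds_origin (x y : R -> R) (T : R) : Prop :=
  (forall t, 0 < x t ^ 2 + y t ^ 2) /\
  exists theta : R -> R,
    (forall t, continuity_pt theta t) /\
    (forall t, x t = sqrt (x t ^ 2 + y t ^ 2) * cos (theta t) /\
               y t = sqrt (x t ^ 2 + y t ^ 2) * sin (theta t)) /\
    theta T - theta 0 <> 0.

Definition isochronous_center (P Q : R -> R -> R) : Prop :=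
  exists r T : R, 0 < r /\ 0 < T /\
  forall x0 y0 : R, 0 < x0 ^ 2 + y0 ^ 2 < r ^ 2 ->
    exists x y : R -> R,
      is_solution P Q x y /\ x 0 = x0 /\ y 0 = y0 /\
      (forall t, x (t + T) = x t /\ y (t + T) = y t) /\
      (forall s, 0 < s < T -> ~ (x s = x0 /\ y s = y0)) /\
      surrounds_origin x y T.

(* Zero Urabe function, following the paper's construction:
   P = p0(x) + p1(x) y, Q = q0(x) + q1(x) y + q2(x) y^2, with
   p0(0)=q0(0)=0, p1(0)<>0 and the compatibility identity; then
   f = -(q2+p1')/p1, g = -q2 p0^2/p1 + q1 p0 - p1 q0, F(x) = int_0^x f,
   xi given by xi^2/2 = int_0^x g e^{2F}, x xi(x) > 0 (x<>0),
   and the Urabe function is zero iff xi(x) = g(x) e^{F(x)} near 0.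
   The integrals are represented by their (unique) antiderivatives
   vanishing at 0. *)
Definition zero_urabe (P Q : R -> R -> R) : Prop :=
  exists p0 p1 q0 q1 q2 dp0 dp1 : R -> R,
    (forall x y, P x y = p0 x + p1 x * y) /\
    (forall x y, Q x y = q0 x + q1 x * y + q2 x * y ^ 2) /\
    (forall x, derivable_pt_lim p0 x (dp0 x)) /\
    (forall x, derivable_pt_lim p1 x (dp1 x)) /\
    p0 0 = 0 /\ q0 0 = 0 /\ p1 0 <> 0 /\
    let f := fun x => - (q2 x + dp1 x) / p1 x in
    let g := fun x => - (q2 x * p0 x ^ 2) / p1 x + q1 x * p0 x - p1 x * q0 x in
    exists delta : R, 0 < delta /\
      (forall x, Rabs x < delta -> p1 x <> 0 /\
         - (dp1 x * p0 x) / p1 x + q1 x + dp0 x - 2 * q2 x * p0 x / p1 x = 0) /\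
      exists F H : R -> R,
        F 0 = 0 /\ H 0 = 0 /\
        (forall x, Rabs x < delta -> derivable_pt_lim F x (f x)) /\
        (forall x, Rabs x < delta -> derivable_pt_lim H x (g x * exp (2 * F x))) /\
        (forall x, Rabs x < delta ->
           / 2 * (g x * exp (F x)) ^ 2 = H x /\
           (x <> 0 -> 0 < x * (g x * exp (F x)))).

Definition isochronous_zero_urabe (P Q : R -> R -> R) : Prop :=
  isochronous_center P Q /\ zero_urabe P Q.

Definition P1 (a : R) (x y : R) : R := - y + a * x * y + x ^ 2 - a * x ^ 3.
Definition Q1 (a : R) (x y : R) : R :=
  x + 4 * a * y ^ 2 - 2 * x * y - 3 / 2 * a * x ^ 2 - 6 * a * x ^ 2 * y
  + (2 + a ^ 2) * x ^ 3 + (2 * a - 1 / 4 * a ^ 3) * x ^ 4.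

Definition P2 (a : R) (x y : R) : R := - y + a * x * y + x ^ 2 - a * x ^ 3.
Definition Q2 (a : R) (x y : R) : R :=
  x + 3 * a * y ^ 2 - 2 * x * y - a * x ^ 2 - 4 * a * x ^ 2 * y
  + (1 / 3 * a ^ 2 + 2) * x ^ 3 + a * x ^ 4.

Definition P3 (b : R) (x y : R) : R := - y + 2 * b * x * y + x ^ 2 - 2 * b * x ^ 3.
Definition Q3 (b : R) (x y : R) : R :=
  x + 8 * b * y ^ 2 - 2 * x * y - 3 * b * x ^ 2 - 12 * b * x ^ 2 * y
  + 14 * x ^ 3 - 2 * b * x ^ 4.

Definition P4 (al : R) (x y : R) : R :=
  - y + al * x * y + x ^ 2 - 4 / 3 * al * x ^ 3 + 2 / 3 * x ^ 4.
Definition Q4 (al : R) (x y : R) : R :=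
  x + 6 * al * y ^ 2 - 2 * x * y - 5 / 2 * al * x ^ 2 - 9 * al * x ^ 2 * y
  + 26 / 3 * x ^ 3 + 6 * x ^ 3 * y - 8 / 3 * al * x ^ 4.

Definition P5 (al : R) (x y : R) : R :=
  - y + al * x * y + x ^ 2 - 4 / 3 * al * x ^ 3 + 2 / 3 * x ^ 4.
Definition Q5 (al : R) (x y : R) : R :=
  x + 3 * al * y ^ 2 - 2 * x * y - al * x ^ 2 - 3 * al * x ^ 2 * y
  + 8 / 3 * x ^ 3 + 2 * x ^ 3 * y - 2 / 3 * al * x ^ 4.

From Stdlib Require Import Reals Lra Lia.
Open Scope R_scope.

(* All five systems have [p1 x = k x - 1] and a constant [q2 = m] with [n k = m + k] for an
   integer [n >= 2], so [e ^ F = (1 - k x) ^ (- n)] and the Urabe function vanishes iff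
   [xi = g e ^ F] satisfies [xi' = e ^ F]; for each system this reduces to polynomial
   identities.  In the variables [x' = z], [z' = - g - f z ^ 2] one then computes
   [(xi x)'' = (e ^ F z)' = - e ^ F g = - xi x]: the map [x |-> xi x] conjugates the
   motion to a harmonic oscillator.  Hence every solution near [O] is
   [x t = X (rho cos (t + phi))] with [X] the local inverse of [xi] (explicitly, the solution
   of [X' = (1 - k X) ^ n], [X 0 = 0]), so all orbits are closed with period [2 pi].  They
   wind once around [O] because [x cos (t + phi) + y sin (t + phi) > 0] for small [rho]. *)

Local Notation Dpl := derivable_pt_lim.

Lemma dpl_eq f x l1 l2 : Dpl f x l1 -> l1 = l2 -> Dpl f x l2.
Proof. now intros H <-. Qed.

Lemma dpl_comp g F x a b : Dpl g x a -> Dpl F (g x) b -> Dpl (fun y => F (g y)) x (b * a).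
Proof. exact (derivable_pt_lim_comp g F x a b). Qed.

Lemma dpl_continuous f x l : Dpl f x l -> continuity_pt f x.
Proof. intros H; exact (derivable_continuous_pt f x (exist _ l H)). Qed.

(* Leaves the derivatives of opaque functions and the side conditions of
   [ln], [Rpower] and division as subgoals. *)
Ltac derive :=
  match goal with
  | |- Dpl (fun _ => ?c) _ _ => apply derivable_pt_lim_const
  | |- Dpl (fun y => y) _ _ => apply derivable_pt_lim_id
  | |- Dpl (fun y => @?f y + @?g y) _ _ => apply (derivable_pt_lim_plus f g); derive
  | |- Dpl (fun y => @?f y - @?g y) _ _ => apply (derivable_pt_lim_minus f g); derive
  | |- Dpl (fun y => @?f y * @?g y) _ _ => apply (derivable_pt_lim_mult f g); derive
  | |- Dpl (fun y => @?f y / @?g y) _ _ => apply (derivable_pt_lim_div f g); derive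
  | |- Dpl (fun y => - @?f y) _ _ => apply (derivable_pt_lim_opp f); derive
  | |- Dpl (fun y => @?f y ^ ?n) _ _ =>
      apply (dpl_comp f (fun z => z ^ n)); [derive | apply derivable_pt_lim_pow]
  | |- Dpl (fun y => Rpower (@?f y) ?e) _ _ =>
      apply (dpl_comp f (fun z => Rpower z e)); [derive | apply derivable_pt_lim_power]
  | |- Dpl (fun y => ?F (@?f y)) _ _ =>
      apply (dpl_comp f F);
      [derive | first [ apply derivable_pt_lim_exp | apply derivable_pt_lim_ln
                      | apply derivable_pt_lim_cos | apply derivable_pt_lim_sin
                      | apply derivable_pt_lim_atan | idtac ]]
  | |- _ => idtac
  end.

Ltac derive_eq := eapply dpl_eq; [derive |].

Lemma mvt_ball f f' c a b : (forall u, Rabs u < c -> Dpl f u (f' u)) ->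
  Rabs a < c -> Rabs b < c -> a < b -> exists t, Rabs t < c /\ f b - f a = f' t * (b - a).
Proof.
  intros Hf Ha Hb Hab. apply Rabs_def2 in Ha, Hb.
  destruct (MVT_cor2 f f' a b Hab) as (t & Ht & Hta).
  - intros t Ht; apply Hf, Rabs_def1; lra.
  - exists t; split; [apply Rabs_def1; lra | exact Ht].
Qed.

Lemma mvt_origin f f' c u : f 0 = 0 -> (forall v, Rabs v < c -> Dpl f v (f' v)) ->
  Rabs u < c -> exists t, Rabs t < c /\ f u = f' t * u.
Proof.
  intros Hf0 Hf Hu. assert (H0 : Rabs 0 < c) by (rewrite Rabs_R0; pose proof (Rabs_pos u); lra).
  destruct (Rtotal_order u 0) as [Hneg | [-> | Hpos]].
  - destruct (mvt_ball f f' c u 0 Hf Hu H0 Hneg) as (t & Ht & E).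
    exists t; split; [exact Ht | rewrite Hf0 in E; lra].
  - exists 0; split; [exact H0 | rewrite Hf0; ring].
  - destruct (mvt_ball f f' c 0 u Hf H0 Hu Hpos) as (t & Ht & E).
    exists t; split; [exact Ht | rewrite Hf0 in E; lra].
Qed.

Lemma exp_le_mono x y : x <= y -> exp x <= exp y.
Proof. intros [H | ->]; [left; apply exp_increasing, H | right; reflexivity]. Qed.

(* [b ^ e] lies between [1 = b ^ 0] and [/ b = b ^ (-1)]. *)
Lemma Rpower_bounds_nonpos_exponent b e :
  / 2 <= b <= 2 -> - 1 <= e <= 0 -> / 2 <= Rpower b e <= 2.
Proof.
  intros Hb He. unfold Rpower.
  assert (Hinv : exp (- ln b) = / b) by (rewrite exp_Ropp, exp_ln; lra).
  assert (Hinvb : / 2 <= / b <= 2).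
  { split; [apply Rinv_le_contravar | rewrite <- (Rinv_inv 2); apply Rinv_le_contravar]; lra. }
  destruct (Rle_or_lt 0 (ln b)) as [Hl | Hl]; split.
  - apply Rle_trans with (exp (- ln b)); [lra | apply exp_le_mono; nra].
  - apply Rle_trans with (exp 0); [apply exp_le_mono; nra | rewrite exp_0; lra].
  - apply Rle_trans with (exp 0); [rewrite exp_0; lra | apply exp_le_mono; nra].
  - apply Rle_trans with (exp (- ln b)); [apply exp_le_mono; nra | lra].
Qed.

Lemma power_ode_solution (k : R) (n : nat) : (2 <= n)%nat ->
  exists c X, 0 < c /\ X 0 = 0 /\
    forall u, Rabs u < c -> Dpl X u ((1 - k * X u) ^ n) /\ / 2 <= 1 - k * X u <= 2.
Proof.
  intros Hn. assert (HN : 2 <= INR n) by (apply (le_INR 2) in Hn; simpl in Hn; lra).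
  destruct (Req_dec k 0) as [-> | Hk].
  { exists 1, (fun u => u). split; [lra | split; [reflexivity |]].
    intros u _. rewrite Rmult_0_l, Rminus_0_r, pow1. split; [apply derivable_pt_lim_id | lra]. }
  (* [1 - k X u = b ^ e] with [b = 1 + k (n - 1) u] and [e = - 1 / (n - 1)] solves
     [Y' = - k Y ^ n], [Y 0 = 1]. *)
  set (e := - / (INR n - 1)).
  assert (He : - 1 <= e <= 0).
  { unfold e. assert (0 < / (INR n - 1) <= 1); [split | lra].
    - apply Rinv_0_lt_compat; lra.
    - rewrite <- Rinv_1; apply Rinv_le_contravar; lra. }
  assert (HkN : 0 <= Rabs k * (INR n - 1)) by (apply Rmult_le_pos; [apply Rabs_pos | lra]).
  exists (/ (2 * (Rabs k * (INR n - 1) + 1))),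
         (fun u => (1 - Rpower (1 + k * (INR n - 1) * u) e) / k).
  split; [apply Rinv_0_lt_compat; lra |].
  split; [unfold Rpower; rewrite Rmult_0_r, Rplus_0_r, ln_1, Rmult_0_r, exp_0; field; exact Hk |].
  intros u Hu.
  assert (Hb : / 2 < 1 + k * (INR n - 1) * u < 3 / 2).
  { assert (Rabs (k * (INR n - 1) * u) < / 2); [| apply Rabs_def2 in H; lra].
    rewrite !Rabs_mult, (Rabs_right (INR n - 1)) by lra.
    apply (Rmult_lt_compat_r (2 * (Rabs k * (INR n - 1) + 1))) in Hu; [| lra].
    rewrite Rinv_l in Hu by lra. pose proof (Rabs_pos u). nra. }
  replace (1 - k * ((1 - Rpower (1 + k * (INR n - 1) * u) e) / k))
    with (Rpower (1 + k * (INR n - 1) * u) e) by (field; exact Hk).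
  split; [| apply Rpower_bounds_nonpos_exponent; lra].
  derive_eq; [lra | exact Hk |].
  rewrite <- Rpower_pow, Rpower_mult by apply exp_pos.
  replace (e - 1) with (e * INR n) by (unfold e; field; lra).
  unfold Rsqr, e. field. lra.
Qed.

Lemma exists_pos_below a b e : 0 < a -> 0 < b -> 0 < e ->
  exists r, 0 < r /\ r <= a /\ r <= b /\ r <= e.
Proof.
  intros Ha Hb He. exists (Rmin a (Rmin b e)).
  split; [apply Rmin_pos; [| apply Rmin_pos]; assumption |].
  split; [apply Rmin_l |].
  split; (eapply Rle_trans; [apply Rmin_r |]); [apply Rmin_l | apply Rmin_r].
Qed.

Lemma pow_pred_succ x n : (1 <= n)%nat -> x ^ n = x * x ^ pred n.
Proof. intros Hn. destruct n as [| n]; [lia | reflexivity]. Qed.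

Lemma polar_angle a b : 0 < a ^ 2 + b ^ 2 ->
  exists phi, a = sqrt (a ^ 2 + b ^ 2) * cos phi /\ b = sqrt (a ^ 2 + b ^ 2) * sin phi.
Proof.
  intros H. set (r := sqrt (a ^ 2 + b ^ 2)).
  assert (Hr : 0 < r) by (apply sqrt_lt_R0; exact H).
  assert (Hr2 : r ^ 2 = a ^ 2 + b ^ 2) by (unfold r; rewrite <- Rsqr_pow2; apply Rsqr_sqrt; lra).
  assert (Hsq : (a / r) ^ 2 + (b / r) ^ 2 = 1).
  { replace ((a / r) ^ 2 + (b / r) ^ 2) with ((a ^ 2 + b ^ 2) / r ^ 2) by (field; lra).
    rewrite Hr2; field; lra. }
  assert (Har : -1 <= a / r <= 1) by nra.
  assert (Hs : 1 - (a / r)² = (b / r) ^ 2) by (unfold Rsqr; lra).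
  destruct (Rle_or_lt 0 b) as [Hb | Hb].
  - assert (0 <= b / r) by (apply Rmult_le_pos; [lra | left; apply Rinv_0_lt_compat, Hr]).
    exists (acos (a / r)). rewrite cos_acos, sin_acos, Hs, sqrt_pow2 by lra.
    split; field; lra.
  - assert (0 <= - b / r) by (apply Rmult_le_pos; [lra | left; apply Rinv_0_lt_compat, Hr]).
    exists (- acos (a / r)). rewrite cos_neg, sin_neg, cos_acos, sin_acos, Hs by lra.
    replace ((b / r) ^ 2) with ((- b / r) ^ 2) by (field; lra).
    rewrite sqrt_pow2 by lra. split; field; lra.
Qed.

(* The polar angle of [(x, y)] measured from the ray of angle [s]. *)
Lemma polar_angle_from x y s : 0 < x * cos s + y * sin s ->
  let w := (- x * sin s + y * cos s) / (x * cos s + y * sin s) in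
  x = sqrt (x ^ 2 + y ^ 2) * cos (s + atan w) /\ y = sqrt (x ^ 2 + y ^ 2) * sin (s + atan w).
Proof.
  intros HA w. set (A := x * cos s + y * sin s) in *. set (B := - x * sin s + y * cos s) in *.
  set (Rw := sqrt (1 + w²)).
  assert (HR : 0 < Rw) by (apply sqrt_lt_R0; pose proof (Rle_0_sqr w); lra).
  pose proof (sin2_cos2 s) as Hsc. unfold Rsqr in Hsc.
  assert (E : sqrt (x ^ 2 + y ^ 2) = A * Rw).
  { unfold Rw. rewrite <- (sqrt_pow2 A) by lra.
    rewrite <- sqrt_mult by (try apply pow2_ge_0; pose proof (Rle_0_sqr w); lra).
    f_equal. unfold w, Rsqr. field_simplify; [| lra]. unfold A, B. nra. }
  rewrite E, cos_plus, sin_plus, cos_atan, sin_atan. fold Rw. unfold w.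
  split.
  - replace (A * Rw * (cos s * (1 / Rw) - sin s * (B / A / Rw))) with (A * cos s - B * sin s)
      by (field; lra).
    unfold A, B. rewrite <- (Rmult_1_r x) at 1. rewrite <- Hsc. ring.
  - replace (A * Rw * (sin s * (1 / Rw) + cos s * (B / A / Rw))) with (A * sin s + B * cos s)
      by (field; lra).
    unfold A, B. rewrite <- (Rmult_1_r y) at 1. rewrite <- Hsc. ring.
Qed.

Lemma cos_neq_1 s : 0 < s < 2 * PI -> cos s <> 1.
Proof.
  intros Hs. replace s with (2 * (s / 2)) by field. rewrite cos_2a_sin.
  assert (0 < sin (s / 2)) by (apply sin_gt_0; lra). nra.
Qed.

Lemma sum_sq_pos_of_inner_pos a b c s : 0 < a * c + b * s -> 0 < a ^ 2 + b ^ 2.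
Proof.
  intros H. destruct (Req_dec a 0) as [-> | Ha]; [destruct (Req_dec b 0) as [-> | Hb] |]; nra.
Qed.

Lemma sqrt_sum_sq_le a b : sqrt (a ^ 2 + b ^ 2) <= Rabs a + Rabs b.
Proof.
  pose proof (Rabs_pos a). pose proof (Rabs_pos b).
  rewrite <- (sqrt_pow2 (Rabs a + Rabs b)) by lra.
  apply sqrt_le_1_alt. rewrite <- (pow2_abs a), <- (pow2_abs b). nra.
Qed.

Lemma Rabs_lt_of_sq_lt a r : 0 < r -> a ^ 2 < r ^ 2 -> Rabs a < r.
Proof. intros Hr H. rewrite <- (pow2_abs a) in H. pose proof (Rabs_pos a). nra. Qed.

(* Under the compatibility identity the terms linear in [z] cancel, so the substitution
   [z = p0 x + p1 x y] turns [x' = z, z' = - g x - f x z ^ 2] into the polynomial system. *)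
Lemma riccati_change_of_variables (p0 dp0 p1 dp1 q0 q1 q2 x z : R -> R) (t : R) :
  Dpl p0 (x t) (dp0 (x t)) -> Dpl p1 (x t) (dp1 (x t)) -> p1 (x t) <> 0 ->
  - (dp1 (x t) * p0 (x t)) / p1 (x t) + q1 (x t) + dp0 (x t)
    - 2 * q2 (x t) * p0 (x t) / p1 (x t) = 0 ->
  Dpl x t (z t) ->
  Dpl z t (- (- (q2 (x t) * p0 (x t) ^ 2) / p1 (x t) + q1 (x t) * p0 (x t) - p1 (x t) * q0 (x t))
           - (- (q2 (x t) + dp1 (x t)) / p1 (x t)) * z t ^ 2) ->
  Dpl (fun s => (z s - p0 (x s)) / p1 (x s)) t
    (q0 (x t) + q1 (x t) * ((z t - p0 (x t)) / p1 (x t))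
     + q2 (x t) * ((z t - p0 (x t)) / p1 (x t)) ^ 2).
Proof.
  intros Hp0 Hp1 Hp1nz Hcompat Hx Hz.
  derive_eq; try eassumption.
  assert (Hq1 : q1 (x t) = dp1 (x t) * p0 (x t) / p1 (x t) - dp0 (x t)
                           + 2 * q2 (x t) * p0 (x t) / p1 (x t)) by (unfold Rdiv in *; lra).
  rewrite Hq1. unfold Rsqr. field. exact Hp1nz.
Qed.

(* The paper's [g] for [p1 x = k x - 1] and [q2 = m]; [urabe_xi] is [g e ^ F], since
   [e ^ F = (1 - k x) ^ (- n)] when [n k = m + k]. *)
Definition urabe_g (k m : R) (p0 q0 q1 : R -> R) (x : R) : R :=
  - (m * p0 x ^ 2) / (k * x - 1) + q1 x * p0 x - (k * x - 1) * q0 x.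

Definition urabe_xi (k m : R) (n : nat) (p0 q0 q1 : R -> R) (x : R) : R :=
  urabe_g k m p0 q0 q1 x / (1 - k * x) ^ n.

Section UrabeFamily.

Variables (P Q : R -> R -> R) (k m : R) (n : nat) (p0 dp0 q0 q1 : R -> R) (d Kp : R).

Hypotheses
  (Hn : (2 <= n)%nat) (Hnk : INR n * k = m + k)
  (HP : forall x y, P x y = p0 x + (k * x - 1) * y)
  (HQ : forall x y, Q x y = q0 x + q1 x * y + m * y ^ 2)
  (Hdp0 : forall x, Dpl p0 x (dp0 x)) (Hp00 : p0 0 = 0) (Hq00 : q0 0 = 0)
  (Hd : 0 < d) (HKp : 0 < Kp)
  (HW : forall x, Rabs x < d -> / 2 <= 1 - k * x <= 3 / 2)
  (Hcompat : forall x, Rabs x < d ->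
     - (k * p0 x) / (k * x - 1) + q1 x + dp0 x - 2 * m * p0 x / (k * x - 1) = 0)
  (Hp0 : forall x, Rabs x < d -> Rabs (p0 x) <= Kp * x ^ 2)
  (Hxi : forall x, Rabs x < d -> Dpl (urabe_xi k m n p0 q0 q1) x (/ (1 - k * x) ^ n)).

Local Notation g := (urabe_g k m p0 q0 q1).
Local Notation xi := (urabe_xi k m n p0 q0 q1).
Local Notation K := (2 ^ n).

Lemma K_ge_1 : 1 <= K.
Proof. apply pow_R1_Rle; lra. Qed.

Lemma xi_origin : xi 0 = 0.
Proof. unfold urabe_xi, urabe_g. rewrite Hp00, Hq00, Rmult_0_r. unfold Rdiv. ring. Qed.

Lemma xi_deriv_bounds x : Rabs x < d -> 0 < / (1 - k * x) ^ n <= K.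
Proof.
  intros Hx. pose proof (HW x Hx) as HWx. split.
  - apply Rinv_0_lt_compat, pow_lt; lra.
  - rewrite <- pow_inv. apply pow_incr. split.
    + left; apply Rinv_0_lt_compat; lra.
    + rewrite <- (Rinv_inv 2). apply Rinv_le_contravar; lra.
Qed.

Lemma xi_increasing a b : Rabs a < d -> Rabs b < d -> a < b -> xi a < xi b.
Proof.
  intros Ha Hb Hab.
  destruct (mvt_ball xi (fun x => / (1 - k * x) ^ n) d a b Hxi Ha Hb Hab) as (t & Ht & E).
  pose proof (xi_deriv_bounds t Ht). nra.
Qed.

Lemma xi_injective a b : Rabs a < d -> Rabs b < d -> xi a = xi b -> a = b.
Proof.
  intros Ha Hb E. destruct (Rtotal_order a b) as [H | [H | H]]; [| exact H |].
  - pose proof (xi_increasing a b Ha Hb H); lra.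
  - pose proof (xi_increasing b a Hb Ha H); lra.
Qed.

Lemma xi_abs_le x : Rabs x < d -> Rabs (xi x) <= K * Rabs x.
Proof.
  intros Hx.
  destruct (mvt_origin xi (fun x => / (1 - k * x) ^ n) d x xi_origin Hxi Hx) as (t & Ht & ->).
  pose proof (xi_deriv_bounds t Ht). rewrite Rabs_mult, Rabs_right by lra.
  apply Rmult_le_compat_r; [apply Rabs_pos | lra].
Qed.

Lemma xi_sign x : Rabs x < d -> x <> 0 -> 0 < x * xi x.
Proof.
  intros Hx Hx0. assert (H0 : Rabs 0 < d) by (rewrite Rabs_R0; exact Hd).
  destruct (Rtotal_order x 0) as [H | [H | H]]; [| contradiction |].
  - pose proof (xi_increasing x 0 Hx H0 H). rewrite xi_origin in *. nra.
  - pose proof (xi_increasing 0 x H0 Hx H). rewrite xi_origin in *. nra.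
Qed.

Lemma P_abs_le x y r : r <= 1 -> r <= d -> Rabs x < r -> Rabs y < r ->
  Rabs (P x y) <= (Kp + 2) * r.
Proof.
  intros Hr1 Hrd Hx Hy. assert (Hxd : Rabs x < d) by lra. pose proof (HW x Hxd).
  rewrite HP. apply Rle_trans with (Rabs (p0 x) + Rabs ((k * x - 1) * y)); [apply Rabs_triang |].
  rewrite Rabs_mult, Rabs_minus_sym, (Rabs_right (1 - k * x)) by lra.
  assert (x ^ 2 <= r) by (rewrite <- pow2_abs; pose proof (Rabs_pos x); nra).
  pose proof (Hp0 x Hxd). pose proof (Rabs_pos y). nra.
Qed.

Lemma phase_map_zero x y : Rabs x < d -> xi x = 0 -> P x y = 0 -> x = 0 /\ y = 0.
Proof.
  intros Hx Hxi0 HP0.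
  assert (Hx0 : x = 0).
  { apply xi_injective; [exact Hx | rewrite Rabs_R0; exact Hd |]. rewrite Hxi0, xi_origin. reflexivity. }
  rewrite HP, Hx0, Hp00 in HP0. split; [exact Hx0 | lra].
Qed.

Lemma exp_F x : Rabs x < d -> exp (- INR n * ln (1 - k * x)) = / (1 - k * x) ^ n.
Proof.
  intros Hx. pose proof (HW x Hx).
  rewrite Ropp_mult_distr_l_reverse, <- ln_pow, exp_Ropp, exp_ln by (try apply pow_lt; lra).
  reflexivity.
Qed.

Theorem zero_urabe_family : zero_urabe P Q.
Proof.
  exists p0, (fun x => k * x - 1), q0, q1, (fun _ => m), dp0, (fun _ => k).
  split; [exact HP |]. split; [exact HQ |]. split; [exact Hdp0 |].
  split; [intros x; derive_eq; ring |].
  split; [exact Hp00 |]. split; [exact Hq00 |]. split; [lra |].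
  intros f gf. exists d. split; [exact Hd |].
  split; [intros x Hx; pose proof (HW x Hx); split; [lra | exact (Hcompat x Hx)] |].
  exists (fun x => - INR n * ln (1 - k * x)), (fun x => / 2 * xi x ^ 2).
  split; [rewrite Rmult_0_r, Rminus_0_r, ln_1; ring |].
  split; [rewrite xi_origin; ring |].
  assert (Hgf : forall x, Rabs x < d -> gf x = xi x * (1 - k * x) ^ n).
  { intros x Hx. pose proof (HW x Hx). unfold gf, urabe_xi, urabe_g. field.
    repeat split; try apply pow_nonzero; lra. }
  split; [| split].
  - intros x Hx. pose proof (HW x Hx). derive_eq; [lra |].
    unfold f. rewrite <- Hnk. field. lra.
  - intros x Hx. pose proof (HW x Hx). derive_eq; [apply Hxi, Hx |].
    rewrite Hgf by exact Hx.
    replace (2 * (- INR n * ln (1 - k * x)))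
      with (- INR n * ln (1 - k * x) + - INR n * ln (1 - k * x)) by ring.
    rewrite exp_plus, exp_F by exact Hx. cbn [pred INR]. field. apply pow_nonzero; lra.
  - intros x Hx. rewrite exp_F, Hgf by exact Hx.
    replace (xi x * (1 - k * x) ^ n * / (1 - k * x) ^ n) with (xi x)
      by (pose proof (HW x Hx); field; apply pow_nonzero; lra).
    split; [reflexivity | intros; apply xi_sign; assumption].
Qed.

Section Flow.

Variables (c0 : R) (X : R -> R).
Hypotheses (HX0 : X 0 = 0)
  (HX : forall u, Rabs u < c0 -> Dpl X u ((1 - k * X u) ^ n) /\ / 2 <= 1 - k * X u <= 2).

Lemma X_bounds u : Rabs u < c0 -> u ^ 2 / K <= X u * u /\ Rabs (X u) <= K * Rabs u.
Proof.
  intros Hu.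
  destruct (mvt_origin X (fun v => (1 - k * X v) ^ n) c0 u HX0 (fun v Hv => proj1 (HX v Hv)) Hu)
    as (t & Ht & ->).
  destruct (HX t Ht) as [_ HWt].
  assert (Hlow : / K <= (1 - k * X t) ^ n) by (rewrite <- pow_inv; apply pow_incr; lra).
  assert (Hup : (1 - k * X t) ^ n <= K) by (apply pow_incr; lra).
  assert (0 < (1 - k * X t) ^ n) by (apply pow_lt; lra).
  split.
  - replace ((1 - k * X t) ^ n * u * u) with ((1 - k * X t) ^ n * u ^ 2) by ring.
    unfold Rdiv. rewrite Rmult_comm. apply Rmult_le_compat_r; [apply pow2_ge_0 | exact Hlow].
  - rewrite Rabs_mult, (Rabs_right ((1 - k * X t) ^ n)) by lra.
    apply Rmult_le_compat_r; [apply Rabs_pos | exact Hup].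
Qed.

(* [u = xi x] oscillates harmonically and [z = x' = e ^ (- F) u'] with
   [e ^ (- F) = (1 - k x) ^ n]. *)
Definition orbit_x (rho phi t : R) : R := X (rho * cos (t + phi)).
Definition orbit_z (rho phi t : R) : R := - rho * sin (t + phi) * (1 - k * orbit_x rho phi t) ^ n.
Definition orbit_y (rho phi t : R) : R :=
  (orbit_z rho phi t - p0 (orbit_x rho phi t)) / (k * orbit_x rho phi t - 1).

Section Radius.

Variable c : R.
Hypotheses (Hc : 0 < c) (Hcc0 : c <= c0) (Hcd : K * c < d) (HcKp : 3 * Kp * K ^ 3 * c <= 1).

Lemma X_in_domain u : Rabs u < c -> Rabs (X u) < d.
Proof.
  intros Hu. destruct (X_bounds u) as [_ H]; [lra |]. pose proof K_ge_1. nra.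
Qed.

Lemma xi_X u : Rabs u < c -> xi (X u) = u.
Proof.
  intros Hu.
  assert (Hd0 : forall v, Rabs v < c -> Dpl (fun v => xi (X v) - v) v 0).
  { intros v Hv. pose proof (HW _ (X_in_domain v Hv)).
    derive_eq; [apply HX; lra | apply Hxi, X_in_domain, Hv |].
    field. apply pow_nonzero; lra. }
  destruct (mvt_origin (fun v => xi (X v) - v) (fun _ => 0) c u) as (t & _ & E);
    [rewrite HX0, xi_origin; ring | exact Hd0 | exact Hu |].
  lra.
Qed.

Lemma quadratic_term_small rho : 0 < rho < c -> 2 * Kp * K ^ 2 * rho ^ 2 < 2 / 3 * (rho / K).
Proof.
  intros Hrho. pose proof K_ge_1.
  apply (Rmult_lt_reg_r (3 * K / rho)); [apply Rdiv_lt_0_compat; lra |].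
  replace (2 / 3 * (rho / K) * (3 * K / rho)) with 2 by (field; lra).
  replace (2 * Kp * K ^ 2 * rho ^ 2 * (3 * K / rho)) with (2 * (3 * Kp * K ^ 3 * rho))
    by (field; lra).
  assert (3 * Kp * K ^ 3 * rho < 3 * Kp * K ^ 3 * c)
    by (apply Rmult_lt_compat_l; [apply Rmult_lt_0_compat; [lra | apply pow_lt; lra] | lra]).
  lra.
Qed.

Section Orbit.

Variables rho phi : R.
Hypothesis Hrho : 0 < rho < c.

Lemma orbit_arg_small t : Rabs (rho * cos (t + phi)) < c.
Proof.
  rewrite Rabs_mult, (Rabs_right rho) by lra.
  pose proof (Rabs_pos (cos (t + phi))).
  assert (Rabs (cos (t + phi)) <= 1) by (apply Rabs_le, COS_bound). nra.
Qed.

Lemma orbit_x_in_domain t : Rabs (orbit_x rho phi t) < d.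
Proof. apply X_in_domain, orbit_arg_small. Qed.

Lemma orbit_W_bounds t : / 2 <= 1 - k * orbit_x rho phi t <= 3 / 2.
Proof. apply HW, orbit_x_in_domain. Qed.

Lemma xi_orbit_x t : xi (orbit_x rho phi t) = rho * cos (t + phi).
Proof. apply xi_X, orbit_arg_small. Qed.

Lemma P_orbit t : P (orbit_x rho phi t) (orbit_y rho phi t) = orbit_z rho phi t.
Proof. rewrite HP. unfold orbit_y. pose proof (orbit_W_bounds t). field. lra. Qed.

Lemma orbit_x_deriv t : Dpl (orbit_x rho phi) t (orbit_z rho phi t).
Proof.
  unfold orbit_z, orbit_x. derive_eq; [apply HX; pose proof (orbit_arg_small t); lra |]. ring.
Qed.

Lemma orbit_z_deriv t : Dpl (orbit_z rho phi) t
  (- g (orbit_x rho phi t) - (- (m + k) / (k * orbit_x rho phi t - 1)) * orbit_z rho phi t ^ 2).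
Proof.
  unfold orbit_z at 1. derive_eq; [apply orbit_x_deriv |].
  pose proof (orbit_W_bounds t) as HWt.
  assert (Hg : g (orbit_x rho phi t) = rho * cos (t + phi) * (1 - k * orbit_x rho phi t) ^ n).
  { rewrite <- xi_orbit_x. unfold urabe_xi. field. apply pow_nonzero; lra. }
  rewrite Hg, <- Hnk. unfold orbit_z.
  rewrite (pow_pred_succ (1 - k * orbit_x rho phi t) n) by lia.
  field. repeat split; try apply pow_nonzero; lra.
Qed.

Lemma orbit_solution : is_solution P Q (orbit_x rho phi) (orbit_y rho phi).
Proof.
  intros t. pose proof (orbit_W_bounds t). rewrite P_orbit, HQ.
  split; [apply orbit_x_deriv |].
  apply (riccati_change_of_variables p0 dp0 (fun x => k * x - 1) (fun _ => k) q0 q1 (fun _ => m)).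
  - apply Hdp0.
  - derive_eq. ring.
  - lra.
  - apply Hcompat, orbit_x_in_domain.
  - apply orbit_x_deriv.
  - exact (orbit_z_deriv t).
Qed.

Lemma orbit_periodic t :
  orbit_x rho phi (t + 2 * PI) = orbit_x rho phi t /\ orbit_y rho phi (t + 2 * PI) = orbit_y rho phi t.
Proof.
  unfold orbit_y, orbit_z, orbit_x.
  replace (t + 2 * PI + phi) with (t + phi + 2 * INR 1 * PI) by (simpl; ring).
  rewrite cos_period, sin_period. split; reflexivity.
Qed.

Lemma orbit_x_cos_ge t : rho * cos (t + phi) ^ 2 / K <= orbit_x rho phi t * cos (t + phi).
Proof.
  destruct (X_bounds (rho * cos (t + phi))) as [Hlow _]; [pose proof (orbit_arg_small t); lra |].
  apply (Rmult_le_reg_l rho); [lra |]. pose proof K_ge_1.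
  replace (rho * (rho * cos (t + phi) ^ 2 / K)) with ((rho * cos (t + phi)) ^ 2 / K) by (field; lra).
  replace (rho * (orbit_x rho phi t * cos (t + phi))) with (X (rho * cos (t + phi)) * (rho * cos (t + phi)))
    by (unfold orbit_x; ring).
  exact Hlow.
Qed.

Lemma orbit_x_sq_le t : orbit_x rho phi t ^ 2 <= K ^ 2 * rho ^ 2.
Proof.
  destruct (X_bounds (rho * cos (t + phi))) as [_ Habs]; [pose proof (orbit_arg_small t); lra |].
  rewrite Rabs_mult, (Rabs_right rho) in Habs by lra.
  assert (Rabs (cos (t + phi)) <= 1) by (apply Rabs_le, COS_bound).
  assert (K * (rho * Rabs (cos (t + phi))) <= K * rho).
  { pose proof K_ge_1. apply Rmult_le_compat_l; [lra |]. rewrite <- (Rmult_1_r rho) at 2.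
    apply Rmult_le_compat_l; lra. }
  rewrite <- pow2_abs. replace (K ^ 2 * rho ^ 2) with ((K * rho) ^ 2) by ring.
  apply pow_incr. split; [apply Rabs_pos | unfold orbit_x; lra].
Qed.

Lemma orbit_y_eq t : orbit_y rho phi t =
  p0 (orbit_x rho phi t) / (1 - k * orbit_x rho phi t)
  + rho * sin (t + phi) * ((1 - k * orbit_x rho phi t) ^ n / (1 - k * orbit_x rho phi t)).
Proof. unfold orbit_y, orbit_z. pose proof (orbit_W_bounds t). field. lra. Qed.

(* The orbit is star-shaped with respect to the rotating ray of angle [t + phi]: the
   quadratic term [p0] is dominated because [rho] is small. *)
Lemma orbit_radial_pos t :
  0 < orbit_x rho phi t * cos (t + phi) + orbit_y rho phi t * sin (t + phi).
Proof.
  rewrite orbit_y_eq.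
  pose proof (orbit_W_bounds t) as HWt. pose proof (orbit_x_cos_ge t) as Hcos.
  pose proof (orbit_x_sq_le t) as Hxv. pose proof (Hp0 _ (orbit_x_in_domain t)) as Hp0t.
  pose proof (quadratic_term_small rho Hrho) as Hsmall.
  set (s := t + phi) in *. set (xv := orbit_x rho phi t) in *. set (W := 1 - k * xv) in *.
  pose proof K_ge_1. pose proof (sin2_cos2 s) as Hsc. unfold Rsqr in Hsc.
  pose proof (SIN_bound s).
  assert (Hp0s : Rabs (p0 xv / W * sin s) <= 2 * Kp * K ^ 2 * rho ^ 2).
  { assert (HinvW : 0 < / W <= 2).
    { split; [apply Rinv_0_lt_compat; lra | rewrite <- (Rinv_inv 2); apply Rinv_le_contravar; lra]. }
    unfold Rdiv. rewrite !Rabs_mult, (Rabs_right (/ W)) by lra.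
    assert (Rabs (sin s) <= 1) by (apply Rabs_le; lra).
    pose proof (Rabs_pos (p0 xv)). pose proof (Rabs_pos (sin s)).
    apply Rle_trans with (Kp * xv ^ 2 * 2 * 1).
    - apply Rmult_le_compat; try apply Rmult_le_compat; try apply Rmult_le_pos; lra.
    - nra. }
  assert (Hsin : 2 / 3 * (rho * sin s ^ 2 / K) <= rho * sin s * (W ^ n / W) * sin s).
  { assert (HWn : / K <= W ^ n) by (rewrite <- pow_inv; apply pow_incr; lra).
    assert (HinvW : 2 / 3 <= / W)
      by (replace (2 / 3) with (/ (3 / 2)) by field; apply Rinv_le_contravar; lra).
    replace (rho * sin s * (W ^ n / W) * sin s) with (rho * sin s ^ 2 * (W ^ n * / W))
      by (field; lra).
    replace (2 / 3 * (rho * sin s ^ 2 / K)) with (rho * sin s ^ 2 * (/ K * (2 / 3)))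
      by (field; lra).
    assert (0 < / K) by (apply Rinv_0_lt_compat; lra).
    apply Rmult_le_compat_l; [nra |]. apply Rmult_le_compat; lra. }
  assert (Hsum : 2 / 3 * (rho / K) <= rho * cos s ^ 2 / K + 2 / 3 * (rho * sin s ^ 2 / K)).
  { assert (0 <= rho * cos s ^ 2 / K)
      by (unfold Rdiv; apply Rmult_le_pos; [nra | left; apply Rinv_0_lt_compat; lra]).
    replace (2 / 3 * (rho / K)) with (2 / 3 * (rho * (cos s ^ 2 + sin s ^ 2) / K))
      by (replace (cos s ^ 2 + sin s ^ 2) with 1 by lra; field; lra).
    unfold Rdiv. lra. }
  pose proof (Rle_abs (- (p0 xv / W * sin s))). rewrite Rabs_Ropp in *.
  lra.
Qed.

Lemma orbit_surrounds_origin : surrounds_origin (orbit_x rho phi) (orbit_y rho phi) (2 * PI).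
Proof.
  split; [intros t; exact (sum_sq_pos_of_inner_pos _ _ _ _ (orbit_radial_pos t)) |].
  exists (fun t => t + phi + atan ((- orbit_x rho phi t * sin (t + phi) + orbit_y rho phi t * cos (t + phi))
                                / (orbit_x rho phi t * cos (t + phi) + orbit_y rho phi t * sin (t + phi)))).
  split; [| split].
  - intros t. pose proof (orbit_radial_pos t). pose proof (orbit_solution t) as [Hx Hy].
    eapply dpl_continuous. derive; try eassumption. lra.
  - intros t. exact (polar_angle_from _ _ _ (orbit_radial_pos t)).
  - destruct (orbit_periodic 0) as [Ex Ey]. rewrite Rplus_0_l in Ex, Ey.
    replace (2 * PI + phi) with (phi + 2 * INR 1 * PI) by (simpl; ring).
    rewrite Ex, Ey, cos_period, sin_period, !Rplus_0_l. rewrite INR_1. pose proof PI_RGT_0. lra.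
Qed.

Lemma orbit_returns_first_at_period s : 0 < s < 2 * PI ->
  ~ (orbit_x rho phi s = orbit_x rho phi 0 /\ orbit_y rho phi s = orbit_y rho phi 0).
Proof.
  intros Hs [Ex Ey].
  assert (Hcos : cos (s + phi) = cos phi).
  { apply (Rmult_eq_reg_l rho); [| lra].
    rewrite <- xi_orbit_x, Ex, xi_orbit_x, Rplus_0_l. reflexivity. }
  assert (Hsin : sin (s + phi) = sin phi).
  { assert (Hz : orbit_z rho phi s = orbit_z rho phi 0) by (rewrite <- !P_orbit, Ex, Ey; reflexivity).
    unfold orbit_z in Hz. rewrite Ex, Rplus_0_l in Hz.
    pose proof (orbit_W_bounds 0).
    assert (0 < rho * (1 - k * orbit_x rho phi 0) ^ n) by (apply Rmult_lt_0_compat; [lra | apply pow_lt; lra]).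
    apply (Rmult_eq_reg_r (rho * (1 - k * orbit_x rho phi 0) ^ n)); [| lra]. lra. }
  apply (cos_neq_1 s Hs). replace s with (s + phi - phi) by ring.
  rewrite cos_minus, Hcos, Hsin. pose proof (sin2_cos2 phi). unfold Rsqr in *. lra.
Qed.

End Orbit.

Lemma orbit_through r x0 y0 : 0 < r -> r <= 1 -> r <= d -> K * (Kp + 3) * r < c ->
  0 < x0 ^ 2 + y0 ^ 2 < r ^ 2 ->
  exists rho phi, 0 < rho < c /\ orbit_x rho phi 0 = x0 /\ orbit_y rho phi 0 = y0.
Proof.
  intros Hr Hr1 Hrd Hrc [Hpos Hlt]. pose proof K_ge_1.
  assert (Hx0 : Rabs x0 < r) by (apply Rabs_lt_of_sq_lt; [exact Hr | nra]).
  assert (Hy0 : Rabs y0 < r) by (apply Rabs_lt_of_sq_lt; [exact Hr | nra]).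
  assert (Hx0d : Rabs x0 < d) by lra.
  pose proof (HW x0 Hx0d) as HW0. pose proof (xi_deriv_bounds x0 Hx0d) as Hinv0.
  set (u0 := xi x0). set (v0 := - (P x0 y0 / (1 - k * x0) ^ n)).
  assert (Hu0 : Rabs u0 <= K * r).
  { apply Rle_trans with (K * Rabs x0); [apply xi_abs_le, Hx0d | apply Rmult_le_compat_l; lra]. }
  assert (Hv0 : Rabs v0 <= K * ((Kp + 2) * r)).
  { unfold v0, Rdiv. rewrite Rabs_Ropp, Rabs_mult, (Rabs_right (/ _)), Rmult_comm by lra.
    pose proof (P_abs_le x0 y0 r Hr1 Hrd Hx0 Hy0).
    apply Rmult_le_compat; try apply Rabs_pos; lra. }
  assert (Hnz : 0 < u0 ^ 2 + v0 ^ 2).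
  { destruct (Req_dec u0 0) as [Hu | Hu]; [| nra]. destruct (Req_dec v0 0) as [Hv | Hv]; [| nra].
    assert (HP0 : P x0 y0 = 0).
    { replace (P x0 y0) with (- v0 * (1 - k * x0) ^ n)
        by (unfold v0; field; apply pow_nonzero; lra).
      rewrite Hv. ring. }
    destruct (phase_map_zero x0 y0 Hx0d Hu HP0) as [-> ->]. lra. }
  destruct (polar_angle u0 v0 Hnz) as (phi & Hu & Hv).
  set (rho := sqrt (u0 ^ 2 + v0 ^ 2)) in *.
  assert (Hrho : 0 < rho < c).
  { split; [apply sqrt_lt_R0, Hnz |].
    apply Rle_lt_trans with (Rabs u0 + Rabs v0); [apply sqrt_sum_sq_le | lra]. }
  exists rho, phi.
  assert (Ex : orbit_x rho phi 0 = x0).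
  { apply xi_injective; [apply orbit_x_in_domain, Hrho | exact Hx0d |].
    rewrite xi_orbit_x, Rplus_0_l, <- Hu by exact Hrho. reflexivity. }
  split; [exact Hrho | split; [exact Ex |]].
  unfold orbit_y, orbit_z. rewrite Ex, Rplus_0_l.
  replace (- rho * sin phi) with (- v0) by lra.
  unfold v0. rewrite HP. field. repeat split; try apply pow_nonzero; lra.
Qed.

Lemma isochronous_center_of_flow : isochronous_center P Q.
Proof.
  pose proof K_ge_1.
  destruct (exists_pos_below 1 d (c / (2 * K * (Kp + 3)))) as (r & Hr & Hr1 & Hrd & Hrc);
    [lra | exact Hd | apply Rdiv_lt_0_compat; [exact Hc | nra] |].
  assert (HrK : K * (Kp + 3) * r < c).
  { apply Rle_lt_trans with (K * (Kp + 3) * (c / (2 * K * (Kp + 3)))).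
    - apply Rmult_le_compat_l; [nra | exact Hrc].
    - replace (K * (Kp + 3) * (c / (2 * K * (Kp + 3)))) with (c / 2) by (field; lra). lra. }
  exists r, (2 * PI). split; [exact Hr |]. split; [pose proof PI_RGT_0; lra |].
  intros x0 y0 H0.
  destruct (orbit_through r x0 y0 Hr Hr1 Hrd HrK H0) as (rho & phi & Hrho & <- & <-).
  exists (orbit_x rho phi), (orbit_y rho phi).
  split; [apply orbit_solution, Hrho |]. split; [reflexivity |]. split; [reflexivity |].
  split; [intros t; apply orbit_periodic |].
  split; [intros s Hs; apply orbit_returns_first_at_period; assumption |].
  apply orbit_surrounds_origin, Hrho.
Qed.

End Radius.

End Flow.

Theorem isochronous_center_family : isochronous_center P Q.
Proof.
  destruct (power_ode_solution k n Hn) as (c0 & X & Hc0 & HX0 & HX).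
  pose proof K_ge_1. assert (0 < K ^ 3) by (apply pow_lt; lra).
  destruct (exists_pos_below c0 (d / (2 * K)) (/ (3 * Kp * K ^ 3))) as (c & Hc & Hcc0 & Hcd & HcKp);
    [exact Hc0 | apply Rdiv_lt_0_compat; lra | apply Rinv_0_lt_compat, Rmult_lt_0_compat; lra |].
  apply (isochronous_center_of_flow c0 X HX0 HX c); [exact Hc | exact Hcc0 | |].
  - apply Rle_lt_trans with (K * (d / (2 * K))); [apply Rmult_le_compat_l; lra |].
    replace (K * (d / (2 * K))) with (d / 2) by (field; lra). lra.
  - apply Rle_trans with (3 * Kp * K ^ 3 * / (3 * Kp * K ^ 3)).
    + apply Rmult_le_compat_l; [nra | exact HcKp].
    + rewrite Rinv_r; nra.
Qed.

Theorem isochronous_zero_urabe_family : isochronous_zero_urabe P Q.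
Proof. exact (conj isochronous_center_family zero_urabe_family). Qed.

End UrabeFamily.

Lemma small_domain k x : Rabs x < / (2 * (Rabs k + 1)) -> Rabs (k * x) < / 2 /\ Rabs x < / 2.
Proof.
  intros H. pose proof (Rabs_pos k). pose proof (Rabs_pos x).
  apply (Rmult_lt_compat_l (2 * (Rabs k + 1))) in H; [| lra].
  rewrite Rinv_r in H by lra. rewrite Rabs_mult. split; nra.
Qed.

Lemma urabe_xi_of_factor k m n p0 q0 q1 h y : 1 - k * y <> 0 ->
  m * p0 y ^ 2 - (q1 y * p0 y - (k * y - 1) * q0 y) * (k * y - 1) = (1 - k * y) ^ 2 * h y ->
  urabe_xi k m (S n) p0 q0 q1 y = h y / (1 - k * y) ^ n.
Proof.
  intros HW Hg.
  assert (Hgy : urabe_g k m p0 q0 q1 y = (1 - k * y) * h y).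
  { unfold urabe_g. apply (Rmult_eq_reg_r (k * y - 1)); [| lra].
    transitivity (- (m * p0 y ^ 2 - (q1 y * p0 y - (k * y - 1) * q0 y) * (k * y - 1)));
      [field; lra | rewrite Hg; ring]. }
  unfold urabe_xi. rewrite Hgy. change ((1 - k * y) ^ S n) with ((1 - k * y) * (1 - k * y) ^ n).
  field. split; [apply pow_nonzero |]; lra.
Qed.

Lemma deriv_div_pow_linear h dh k n x : (1 <= n)%nat -> 1 - k * x <> 0 -> Dpl h x (dh x) ->
  dh x * (1 - k * x) + INR n * k * h x = 1 ->
  Dpl (fun y => h y / (1 - k * y) ^ n) x (/ (1 - k * x) ^ S n).
Proof.
  intros Hn HW Hdh Hh.
  derive_eq; [exact Hdh | apply pow_nonzero, HW |].
  assert (Hdhx : dh x = (1 - INR n * k * h x) / (1 - k * x)).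
  { apply (Rmult_eq_reg_r (1 - k * x)); [| exact HW].
    unfold Rdiv. rewrite Rmult_assoc, Rinv_l by exact HW. lra. }
  rewrite Hdhx. change ((1 - k * x) ^ S n) with ((1 - k * x) * (1 - k * x) ^ n).
  rewrite (pow_pred_succ (1 - k * x) n Hn). unfold Rsqr.
  field. split; [apply pow_nonzero |]; exact HW.
Qed.

(* The hypotheses on [g] and [xi] become polynomial identities: [g = (1 - k x) h] with
   [h' (1 - k x) + n k h = 1] says [(h / (1 - k x) ^ n)' = (1 - k x) ^ (- n - 1)]. *)
Theorem isochronous_zero_urabe_of_polynomial_data (P Q : R -> R -> R) (k m : R) (n : nat)
    (p0 dp0 q0 q1 h dh : R -> R) (Kp : R) :
  (1 <= n)%nat -> INR (S n) * k = m + k ->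
  (forall x y, P x y = p0 x + (k * x - 1) * y) ->
  (forall x y, Q x y = q0 x + q1 x * y + m * y ^ 2) ->
  (forall x, Dpl p0 x (dp0 x)) -> p0 0 = 0 -> q0 0 = 0 -> 0 < Kp ->
  (forall x, Rabs x < / (2 * (Rabs k + 1)) -> Rabs (p0 x) <= Kp * x ^ 2) ->
  (forall x, (q1 x + dp0 x) * (k * x - 1) = (k + 2 * m) * p0 x) ->
  (forall x, m * p0 x ^ 2 - (q1 x * p0 x - (k * x - 1) * q0 x) * (k * x - 1)
             = (1 - k * x) ^ 2 * h x) ->
  (forall x, Dpl h x (dh x)) ->
  (forall x, dh x * (1 - k * x) + INR n * k * h x = 1) ->
  isochronous_zero_urabe P Q.
Proof.
  intros Hn Hnk HP HQ Hdp0 Hp00 Hq00 HKp Hp0 Hcompat Hg Hdh Hh.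
  set (d := / (2 * (Rabs k + 1))) in *.
  assert (Hd : 0 < d) by (apply Rinv_0_lt_compat; pose proof (Rabs_pos k); lra).
  assert (HW : forall x, Rabs x < d -> / 2 <= 1 - k * x <= 3 / 2).
  { intros x Hx. destruct (small_domain k x Hx) as [Hkx _]. apply Rabs_def2 in Hkx. lra. }
  apply (isochronous_zero_urabe_family P Q k m (S n) p0 dp0 q0 q1 d Kp);
    [lia | exact Hnk | exact HP | exact HQ | exact Hdp0 | exact Hp00 | exact Hq00 | exact Hd
    | exact HKp | exact HW | | exact Hp0 |].
  - intros x Hx. pose proof (HW x Hx).
    assert (Hq1 : q1 x = (k + 2 * m) * p0 x / (k * x - 1) - dp0 x)
      by (rewrite <- Hcompat; field; lra).
    rewrite Hq1. field. lra.
  - intros x Hx. pose proof (HW x Hx). apply Rabs_def2 in Hx.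
    apply (derivable_pt_lim_locally_ext (fun y => h y / (1 - k * y) ^ n) _ x (- d) d); [lra | |].
    + intros y Hy. assert (Hyd : Rabs y < d) by (apply Rabs_def1; lra).
      pose proof (HW y Hyd). symmetry. apply urabe_xi_of_factor; [lra | apply Hg].
    + apply (deriv_div_pow_linear h dh); [exact Hn | lra | apply Hdh | apply Hh].
Qed.

Lemma sq_mul_abs_le x c C : Rabs c <= C -> Rabs (x ^ 2 * c) <= C * x ^ 2.
Proof.
  intros H. rewrite Rabs_mult, (Rabs_right (x ^ 2)) by (apply Rle_ge, pow2_ge_0).
  rewrite Rmult_comm. apply Rmult_le_compat_r; [apply pow2_ge_0 | exact H].
Qed.

Lemma p0_cubic_bound k x : Rabs x < / (2 * (Rabs k + 1)) -> Rabs (x ^ 2 - k * x ^ 3) <= 2 * x ^ 2.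
Proof.
  intros Hx. destruct (small_domain k x Hx) as [Hkx _]. apply Rabs_def2 in Hkx.
  replace (x ^ 2 - k * x ^ 3) with (x ^ 2 * (1 - k * x)) by ring.
  apply sq_mul_abs_le, Rabs_le. lra.
Qed.

Lemma p0_quartic_bound k x : Rabs x < / (2 * (Rabs k + 1)) ->
  Rabs (x ^ 2 - 4 / 3 * k * x ^ 3 + 2 / 3 * x ^ 4) <= 2 * x ^ 2.
Proof.
  intros Hx. destruct (small_domain k x Hx) as [Hkx Hxs]. apply Rabs_def2 in Hkx, Hxs.
  replace (x ^ 2 - 4 / 3 * k * x ^ 3 + 2 / 3 * x ^ 4)
    with (x ^ 2 * (1 - 4 / 3 * (k * x) + 2 / 3 * x ^ 2)) by ring.
  apply sq_mul_abs_le, Rabs_le. nra.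
Qed.

Lemma sq_of_pm_sqrt c b : 0 <= c -> b = sqrt c \/ b = - sqrt c -> b ^ 2 = c.
Proof.
  intros Hc [-> | ->]; [| rewrite <- Rsqr_pow2, <- Rsqr_neg, Rsqr_pow2];
    rewrite <- Rsqr_pow2; apply Rsqr_sqrt, Hc.
Qed.

Lemma pow_SS_of_sq b c j : b ^ 2 = c -> b ^ S (S j) = c * b ^ j.
Proof. intros <-. simpl. ring. Qed.

Ltac field_with_sq H := ring_simplify; repeat rewrite (pow_SS_of_sq _ _ _ H); field.

Ltac polynomial_data_goal :=
  intros; cbv beta; try simpl INR;
  first [ lia | lra | field | (derive_eq; simpl pred; simpl INR; field) ].

Lemma system_i a : isochronous_zero_urabe (P1 a) (Q1 a).
Proof.
  apply (isochronous_zero_urabe_of_polynomial_data _ _ a (4 * a) 4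
    (fun x => x ^ 2 - a * x ^ 3) (fun x => 2 * x - 3 * a * x ^ 2)
    (fun x => x - 3 / 2 * a * x ^ 2 + (2 + a ^ 2) * x ^ 3 + (2 * a - 1 / 4 * a ^ 3) * x ^ 4)
    (fun x => - 2 * x - 6 * a * x ^ 2)
    (fun x => x - 3 / 2 * a * x ^ 2 + a ^ 2 * x ^ 3 - 1 / 4 * a ^ 3 * x ^ 4)
    (fun x => (1 - a * x) ^ 3) 2); unfold P1, Q1;
    try polynomial_data_goal.
  intros x; apply p0_cubic_bound.
Qed.

Lemma system_ii a : isochronous_zero_urabe (P2 a) (Q2 a).
Proof.
  apply (isochronous_zero_urabe_of_polynomial_data _ _ a (3 * a) 3
    (fun x => x ^ 2 - a * x ^ 3) (fun x => 2 * x - 3 * a * x ^ 2)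
    (fun x => x - a * x ^ 2 + (1 / 3 * a ^ 2 + 2) * x ^ 3 + a * x ^ 4)
    (fun x => - 2 * x - 4 * a * x ^ 2)
    (fun x => x - a * x ^ 2 + 1 / 3 * a ^ 2 * x ^ 3)
    (fun x => (1 - a * x) ^ 2) 2); unfold P2, Q2;
    try polynomial_data_goal.
  intros x; apply p0_cubic_bound.
Qed.

Lemma system_iii b : (b = sqrt 3 \/ b = - sqrt 3) -> isochronous_zero_urabe (P3 b) (Q3 b).
Proof.
  intros Hb. apply sq_of_pm_sqrt in Hb; [| lra].
  apply (isochronous_zero_urabe_of_polynomial_data _ _ (2 * b) (8 * b) 4
    (fun x => x ^ 2 - 2 * b * x ^ 3) (fun x => 2 * x - 6 * b * x ^ 2)
    (fun x => x - 3 * b * x ^ 2 + 14 * x ^ 3 - 2 * b * x ^ 4)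
    (fun x => - 2 * x - 12 * b * x ^ 2)
    (fun x => x - 3 * b * x ^ 2 + 12 * x ^ 3 - 6 * b * x ^ 4)
    (fun x => 1 - 6 * b * x + 36 * x ^ 2 - 24 * b * x ^ 3) 2); unfold P3, Q3;
    try polynomial_data_goal; try (intros; cbv beta; try simpl INR; field_with_sq Hb).
  intros x; apply p0_cubic_bound.
Qed.

Lemma system_iv al : (al = sqrt 2 \/ al = - sqrt 2) -> isochronous_zero_urabe (P4 al) (Q4 al).
Proof.
  intros Hal. apply sq_of_pm_sqrt in Hal; [| lra].
  apply (isochronous_zero_urabe_of_polynomial_data _ _ al (6 * al) 6
    (fun x => x ^ 2 - 4 / 3 * al * x ^ 3 + 2 / 3 * x ^ 4)
    (fun x => 2 * x - 4 * al * x ^ 2 + 8 / 3 * x ^ 3)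
    (fun x => x - 5 / 2 * al * x ^ 2 + 26 / 3 * x ^ 3 - 8 / 3 * al * x ^ 4)
    (fun x => - 2 * x - 9 * al * x ^ 2 + 6 * x ^ 3)
    (fun x => x - 5 / 2 * al * x ^ 2 + 10 / 3 * al ^ 2 * x ^ 3 - 5 / 2 * al ^ 3 * x ^ 4
              + al ^ 4 * x ^ 5 - 1 / 6 * al ^ 5 * x ^ 6)
    (fun x => (1 - al * x) ^ 5) 2); unfold P4, Q4;
    try polynomial_data_goal; try (intros; cbv beta; try simpl INR; field_with_sq Hal).
  intros x; apply p0_quartic_bound.
Qed.

Lemma system_v al : (al = sqrt 2 \/ al = - sqrt 2) -> isochronous_zero_urabe (P5 al) (Q5 al).
Proof.
  intros Hal. apply sq_of_pm_sqrt in Hal; [| lra].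
  apply (isochronous_zero_urabe_of_polynomial_data _ _ al (3 * al) 3
    (fun x => x ^ 2 - 4 / 3 * al * x ^ 3 + 2 / 3 * x ^ 4)
    (fun x => 2 * x - 4 * al * x ^ 2 + 8 / 3 * x ^ 3)
    (fun x => x - al * x ^ 2 + 8 / 3 * x ^ 3 - 2 / 3 * al * x ^ 4)
    (fun x => - 2 * x - 3 * al * x ^ 2 + 2 * x ^ 3)
    (fun x => x - al * x ^ 2 + 1 / 3 * al ^ 2 * x ^ 3)
    (fun x => (1 - al * x) ^ 2) 2); unfold P5, Q5;
    try polynomial_data_goal; try (intros; cbv beta; try simpl INR; field_with_sq Hal).
  intros x; apply p0_quartic_bound.
Qed.

Theorem theorem4p2 :
  (forall a : R, isochronous_zero_urabe (P1 a) (Q1 a)) /\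
  (forall a : R, isochronous_zero_urabe (P2 a) (Q2 a)) /\
  (forall b : R, (b = sqrt 3 \/ b = - sqrt 3) -> isochronous_zero_urabe (P3 b) (Q3 b)) /\
  (forall al : R, (al = sqrt 2 \/ al = - sqrt 2) -> isochronous_zero_urabe (P4 al) (Q4 al)) /\
  (forall al : R, (al = sqrt 2 \/ al = - sqrt 2) -> isochronous_zero_urabe (P5 al) (Q5 al)).
Proof.
  exact (conj system_i (conj system_ii (conj system_iii (conj system_iv system_v)))).
Qed.
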